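(* Let $V$ be a complex normed vector space and $x=\{x_n\}_{n=1}^\infty\in l^{\infty}(V)$. If $x$ is strongly almost convergent to $v\in V$, then $v\in\overline{\mathrm{co}}\{x_n:n\in\mathbb{N}\}$, the norm-closure of the convex hull of $\{x_n:n\in\mathbb{N}\}$.
   Context: $l^{\infty}(V)$ is the space of bounded sequences $x=\{x_n\}_{n=1}^\infty$ in $V$ with norm $\|x\|_\infty=\sup_n\|x_n\|_V$. For $v\in V$, $\widetilde v=\{v,v,\dots\}$. $T$ is the left shift: $T\{x_1,x_2,\dots\}=\{x_2,x_3,\dots\}$. A Banach limit functional is a bounded linear functional $L$ on $l^\infty(V)$ with $\|L\|\le1$ and $L(Tx)=L(x)$ for all $x$. A sequence $x\in l^\infty(V)$ is strongly almost convergent to $v\in V$ if $L(x)=L(\widetilde v)$ for every Banach limit functional $L$. *)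

From Stdlib Require Import Reals.
Open Scope R_scope.

Record CC : Type := mkCC { Cre : R ; Cim : R }.
Definition C0 : CC := mkCC 0 0.
Definition C1 : CC := mkCC 1 0.
Definition RtoC (r : R) : CC := mkCC r 0.
Definition Cplus (a b : CC) : CC := mkCC (Cre a + Cre b) (Cim a + Cim b).
Definition Cmult (a b : CC) : CC :=
  mkCC (Cre a * Cre b - Cim a * Cim b) (Cre a * Cim b + Cim a * Cre b).
Definition Cmod (a : CC) : R := sqrt (Cre a * Cre a + Cim a * Cim a).

Record CNormedSpace : Type := {
  carrier :> Type;
  vzero : carrier;
  vadd : carrier -> carrier -> carrier;
  vopp : carrier -> carrier;
  vscal : CC -> carrier -> carrier;
  vnorm : carrier -> R;
  vadd_assoc : forall x y z, vadd x (vadd y z) = vadd (vadd x y) z;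
  vadd_comm : forall x y, vadd x y = vadd y x;
  vadd_zero : forall x, vadd x vzero = x;
  vadd_opp : forall x, vadd x (vopp x) = vzero;
  vscal_assoc : forall a b x, vscal a (vscal b x) = vscal (Cmult a b) x;
  vscal_one : forall x, vscal C1 x = x;
  vscal_distr_v : forall a x y, vscal a (vadd x y) = vadd (vscal a x) (vscal a y);
  vscal_distr_c : forall a b x, vscal (Cplus a b) x = vadd (vscal a x) (vscal b x);
  vnorm_nonneg : forall x, 0 <= vnorm x;
  vnorm_eq0 : forall x, vnorm x = 0 -> x = vzero;
  vnorm_zero : vnorm vzero = 0;
  vnorm_triangle : forall x y, vnorm (vadd x y) <= vnorm x + vnorm y;
  vnorm_scal : forall a x, vnorm (vscal a x) = Cmod a * vnorm x
}.

Arguments vzero {_}. Arguments vadd {_}. Arguments vopp {_}.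
Arguments vscal {_}. Arguments vnorm {_}.

Definition vsub {V : CNormedSpace} (x y : V) : V := vadd x (vopp y).

(** Elements of l^infty(V): sequences (indexed by nat) with bounded norm. *)
Definition bounded_seq {V : CNormedSpace} (x : nat -> V) : Prop :=
  exists M : R, forall n, vnorm (x n) <= M.

Definition seq_add {V : CNormedSpace} (x y : nat -> V) : nat -> V :=
  fun n => vadd (x n) (y n).
Definition seq_scal {V : CNormedSpace} (a : CC) (x : nat -> V) : nat -> V :=
  fun n => vscal a (x n).
Definition const_seq {V : CNormedSpace} (v : V) : nat -> V := fun _ => v.
Definition shift {V : CNormedSpace} (x : nat -> V) : nat -> V := fun n => x (S n).

(** L is given as a function on all sequences but only its values on bounded
    sequences matter. *)
Definition BanachLimit {V : CNormedSpace} (L : (nat -> V) -> CC) : Prop :=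
  (forall x y, bounded_seq x -> bounded_seq y ->
      L (seq_add x y) = Cplus (L x) (L y)) /\
  (forall a x, bounded_seq x -> L (seq_scal a x) = Cmult a (L x)) /\
  (forall x M, bounded_seq x -> (forall n, vnorm (x n) <= M) -> Cmod (L x) <= M) /\
  (forall x, bounded_seq x -> L (shift x) = L x).

Definition strongly_almost_convergent {V : CNormedSpace} (x : nat -> V) (v : V) : Prop :=
  forall L : (nat -> V) -> CC, BanachLimit L -> L x = L (const_seq v).

Fixpoint vsum {V : CNormedSpace} (f : nat -> V) (n : nat) : V :=
  match n with O => vzero | S k => vadd (vsum f k) (f k) end.
Fixpoint rsum (f : nat -> R) (n : nat) : R :=
  match n with O => 0 | S k => rsum f k + f k end.

Definition in_convex_hull {V : CNormedSpace} (S : V -> Prop) (y : V) : Prop :=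
  exists (n : nat) (lam : nat -> R) (p : nat -> V),
    (forall i, (i < n)%nat -> 0 <= lam i /\ S (p i)) /\
    rsum lam n = 1 /\
    y = vsum (fun i => vscal (RtoC (lam i)) (p i)) n.

Definition in_closure {V : CNormedSpace} (A : V -> Prop) (v : V) : Prop :=
  forall eps : R, 0 < eps -> exists y, A y /\ vnorm (vsub v y) < eps.

Definition range_of {V : CNormedSpace} (x : nat -> V) : V -> Prop :=
  fun w => exists n, w = x n.

(** Let [x] be a bounded sequence in a complex normed space [V], strongly
    almost convergent to [v], and suppose [v] were at distance [>= eps] from
    the convex hull of the terms of [x].  The Cesàro means of [x] belong to
    that hull, so the means of [x - v] all have norm [>= eps], and the
    sublinear functional [p y = limsup_n |(y_0 + ... + y_n) / (n + 1)|] on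
    bounded sequences satisfies [p (x - v) >= eps].  By Hahn–Banach there is a
    real-linear [phi <= p] with [phi (x - v) = p (x - v) > 0]; since [p]
    vanishes on [y - T y], [phi] is shift invariant, and its complexification
    [L y = phi y - i phi (i y)] is a Banach limit.  Then [L x = L v] forces
    [phi (x - v) = 0], a contradiction. *)

From Stdlib Require Import Reals Lra Lia Classical ClassicalEpsilon FunctionalExtensionality ProofIrrelevance.
From mathcomp Require classical_sets boolp.
Open Scope R_scope.
Set Bullet Behavior "Strict Subproofs".

Record RVS : Type := {
  rv_car :> Type;
  rv0 : rv_car;
  radd : rv_car -> rv_car -> rv_car;
  rscal : R -> rv_car -> rv_car;
  radd_assoc : forall x y z, radd x (radd y z) = radd (radd x y) z;
  radd_comm : forall x y, radd x y = radd y x;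
  radd_0 : forall x, radd x rv0 = x;
  radd_opp : forall x, radd x (rscal (-1) x) = rv0;
  rscal_addv : forall r x y, rscal r (radd x y) = radd (rscal r x) (rscal r y);
  rscal_addr : forall r s x, rscal (r + s) x = radd (rscal r x) (rscal s x);
  rscal_scal : forall r s x, rscal r (rscal s x) = rscal (r * s) x;
  rscal_1 : forall x, rscal 1 x = x }.
Arguments rv0 {_}. Arguments radd {_}. Arguments rscal {_}.

Section RVSAlgebra.
Variable E : RVS.

Lemma radd_cancel (a b c : E) : radd a b = radd a c -> b = c.
Proof.
  intro H.
  assert (H' : radd (rscal (-1) a) (radd a b) = radd (rscal (-1) a) (radd a c))
    by (rewrite H; reflexivity).
  rewrite !radd_assoc, (radd_comm _ (rscal (-1) a) a), radd_opp in H'.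
  rewrite (radd_comm _ rv0 b), (radd_comm _ rv0 c), !radd_0 in H'. exact H'.
Qed.

Lemma rscal_0 (x : E) : rscal 0 x = rv0.
Proof.
  apply (radd_cancel (rscal 0 x)). rewrite radd_0, <- rscal_addr. f_equal; ring.
Qed.

Lemma rscal_rv0 (r : R) : rscal r (@rv0 E) = rv0.
Proof. rewrite <- (rscal_0 rv0), rscal_scal. f_equal; ring. Qed.

Lemma radd_0l (x : E) : radd rv0 x = x.
Proof. rewrite radd_comm; apply radd_0. Qed.

Lemma radd_swap (a b c d : E) : radd (radd a b) (radd c d) = radd (radd a c) (radd b d).
Proof.
  rewrite <- !radd_assoc. f_equal. rewrite !radd_assoc. f_equal. apply radd_comm.
Qed.

Lemma rscal_solve (a b z : E) (t s : R) :
  radd a (rscal t z) = radd b (rscal s z) -> rscal (t - s) z = radd b (rscal (-1) a).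
Proof.
  intro H.
  assert (H' : radd (radd a (rscal t z)) (radd (rscal (-1) a) (rscal (-s) z)) =
               radd (radd b (rscal s z)) (radd (rscal (-1) a) (rscal (-s) z)))
    by (rewrite H; reflexivity).
  rewrite (radd_swap a), (radd_swap b), radd_opp, radd_0l, <- !rscal_addr in H'.
  replace (t - s) with (t + - s) by ring. rewrite H'.
  replace (s + - s) with 0 by ring. rewrite rscal_0, radd_0. reflexivity.
Qed.

End RVSAlgebra.

(** * The Hahn–Banach extension theorem

    Partial linear functionals are handled through their graphs [G a x]
    ("the functional takes the value [x] at [a]"), so that unions of chains
    are simply unions of relations. *)
Section HahnBanach.
Variable E : RVS.
Variable p : E -> R.
Hypothesis p_subadditive : forall a b, p (radd a b) <= p a + p b.
Hypothesis p_pos_homogeneous : forall t y, 0 < t -> p (rscal t y) <= t * p y.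

Definition graph := E -> R -> Prop.
Definition graph_incl (G H : graph) : Prop := forall a x, G a x -> H a x.

Record dominated (G : graph) : Prop := {
  dom_functional : forall a x y, G a x -> G a y -> x = y;
  dom_zero : G rv0 0;
  dom_add : forall a b x y, G a x -> G b y -> G (radd a b) (x + y);
  dom_scal : forall t a x, G a x -> G (rscal t a) (t * x);
  dom_bound : forall a x, G a x -> x <= p a }.

Lemma p_pos_homogeneous_ge t y : 0 < t -> t * p y <= p (rscal t y).
Proof.
  intro Ht. pose proof (p_pos_homogeneous (/ t) (rscal t y) (Rinv_0_lt_compat _ Ht)) as H.
  rewrite rscal_scal, Rinv_l, rscal_1 in H by lra.
  apply Rmult_le_compat_l with (r := t) in H; [|lra].
  rewrite <- Rmult_assoc, Rinv_r, Rmult_1_l in H by lra. exact H.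
Qed.

Definition extend (G : graph) (z : E) (c : R) : graph :=
  fun b y => exists a x t, G a x /\ b = radd a (rscal t z) /\ y = x + t * c.

Lemma extend_incl G z c : graph_incl G (extend G z c).
Proof.
  intros a x Ga. exists a, x, 0. rewrite rscal_0, radd_0. split; [|split]; auto; ring.
Qed.

Lemma extend_at G z c : G rv0 0 -> extend G z c z c.
Proof.
  intro G0. exists rv0, 0, 1. rewrite rscal_1, radd_0l. split; [|split]; auto; ring.
Qed.

Lemma extend_functional G z c : dominated G -> (forall y, ~ G z y) ->
  forall a x y, extend G z c a x -> extend G z c a y -> x = y.
Proof.
  intros HG Hz a' u w (a & x & t & Ga & -> & ->) (b & y & s & Gb & Eab & ->).
  destruct (Req_dec t s) as [<- | Hts].
  - assert (a = b).
    { apply (radd_cancel E (rscal t z)). rewrite (radd_comm _ _ a), (radd_comm _ _ b).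
      exact Eab. }
    subst b. rewrite (dom_functional _ HG _ _ _ Ga Gb). reflexivity.
  - exfalso. apply rscal_solve in Eab.
    apply (Hz (/ (t - s) * (y + -1 * x))).
    replace z with (rscal (/ (t - s)) (radd b (rscal (-1) a)))
      by (rewrite <- Eab, rscal_scal, Rinv_l, rscal_1 by lra; reflexivity).
    apply (dom_scal _ HG), (dom_add _ HG); [| apply (dom_scal _ HG)]; assumption.
Qed.

(** The extension stays below [p] when [c] lies between the two bounds
    [x - p (a - z)] and [p (b + z) - y] for all points of [G]; the two cases
    [t < 0] and [t > 0] reduce to these bounds by homogeneity. *)
Lemma extend_bound G z c : dominated G ->
  (forall a x, G a x -> x - p (radd a (rscal (-1) z)) <= c) ->
  (forall b y, G b y -> c <= p (radd b z) - y) ->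
  forall a x, extend G z c a x -> x <= p a.
Proof.
  intros HG Hlow Hup a' u (a & x & t & Ga & -> & ->).
  destruct (Rtotal_order t 0) as [Hneg | [-> | Hpos]].
  - pose proof (Hlow _ _ (dom_scal _ HG (/ - t) _ _ Ga)) as H1.
    pose proof (p_pos_homogeneous_ge (- t) (radd (rscal (/ - t) a) (rscal (-1) z))
                  ltac:(lra)) as H2.
    rewrite rscal_addv, !rscal_scal, Rinv_r, rscal_1 in H2 by lra.
    replace (- t * -1) with t in H2 by ring.
    apply Rmult_le_compat_l with (r := - t) in H1; [|lra].
    replace (- t * (/ - t * x - p (radd (rscal (/ - t) a) (rscal (-1) z)))) with
      (x + t * p (radd (rscal (/ - t) a) (rscal (-1) z))) in H1 by (field; lra).
    lra.
  - rewrite rscal_0, radd_0. replace (x + 0 * c) with x by ring.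
    exact (dom_bound _ HG _ _ Ga).
  - pose proof (Hup _ _ (dom_scal _ HG (/ t) _ _ Ga)) as H1.
    pose proof (p_pos_homogeneous_ge t (radd (rscal (/ t) a) z) Hpos) as H2.
    rewrite rscal_addv, rscal_scal, Rinv_r, rscal_1 in H2 by lra.
    apply Rmult_le_compat_l with (r := t) in H1; [|lra].
    replace (t * (p (radd (rscal (/ t) a) z) - / t * x)) with
      (t * p (radd (rscal (/ t) a) z) - x) in H1 by (field; lra).
    lra.
Qed.

Lemma extend_dominated G z c : dominated G -> (forall y, ~ G z y) ->
  (forall a x, G a x -> x - p (radd a (rscal (-1) z)) <= c) ->
  (forall b y, G b y -> c <= p (radd b z) - y) ->
  dominated (extend G z c).
Proof.
  intros HG Hz Hlow Hup. split.
  - exact (extend_functional G z c HG Hz).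
  - apply extend_incl, (dom_zero _ HG).
  - intros a' b' u w (a & x & t & Ga & -> & ->) (b & y & s & Gb & -> & ->).
    exists (radd a b), (x + y), (t + s). split; [apply (dom_add _ HG); auto|].
    rewrite radd_swap, rscal_addr. split; [reflexivity | ring].
  - intros r a' u (a & x & t & Ga & -> & ->). exists (rscal r a), (r * x), (r * t).
    split; [apply (dom_scal _ HG); auto|].
    rewrite rscal_addv, rscal_scal. split; [reflexivity | ring].
  - exact (extend_bound G z c HG Hlow Hup).
Qed.

(** An admissible value exists since every lower bound is below every upper
    bound, by subadditivity of [p]; take the supremum of the lower bounds. *)
Lemma one_step_extension G z : dominated G -> (forall y, ~ G z y) ->
  exists H, dominated H /\ graph_incl G H /\ exists y, H z y.
Proof.
  intros HG Hz.
  set (lower := fun r => exists a x, G a x /\ r = x - p (radd a (rscal (-1) z))).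
  assert (Hsep : forall r b y, lower r -> G b y -> r <= p (radd b z) - y).
  { intros r b y (a & x & Ga & ->) Gb.
    pose proof (dom_bound _ HG _ _ (dom_add _ HG _ _ _ _ Ga Gb)) as H1.
    pose proof (p_subadditive (radd a (rscal (-1) z)) (radd b z)) as H2.
    rewrite radd_swap, (radd_comm _ (rscal (-1) z) z), radd_opp, radd_0 in H2.
    lra. }
  destruct (completeness lower) as [c [Hc_ub Hc_least]].
  - exists (p (radd rv0 z) - 0). intros r Hr. exact (Hsep r rv0 0 Hr (dom_zero _ HG)).
  - exists (0 - p (radd rv0 (rscal (-1) z))), rv0, 0. split; [exact (dom_zero _ HG) | reflexivity].
  - exists (extend G z c). split; [|split].
    + apply extend_dominated; auto.
      * intros a x Ga. apply Hc_ub. exists a, x. auto.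
      * intros b y Gb. apply Hc_least. intros r Hr. exact (Hsep r b y Hr Gb).
    + apply extend_incl.
    + exists c. apply extend_at, (dom_zero _ HG).
Qed.

(** The union of a nonempty chain of dominated graphs is dominated: any two
    points of the union already lie in a common member of the chain. *)
Lemma chain_union_dominated (C : graph -> Prop) :
  (exists G, C G) -> (forall G, C G -> dominated G) ->
  (forall G H, C G -> C H -> graph_incl G H \/ graph_incl H G) ->
  dominated (fun a x => exists G, C G /\ G a x).
Proof.
  intros [G0 CG0] Cdom Cchain.
  assert (Hcommon : forall a x b y, (exists G, C G /\ G a x) -> (exists G, C G /\ G b y) ->
             exists G, C G /\ G a x /\ G b y).
  { intros a x b y [G [CG Ga]] [H [CH Hb]].
    destruct (Cchain G H CG CH) as [I | I]; [exists H | exists G]; auto. }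
  split.
  - intros a x y Hx Hy. destruct (Hcommon _ _ _ _ Hx Hy) as (G & CG & Gx & Gy).
    exact (dom_functional _ (Cdom G CG) _ _ _ Gx Gy).
  - exists G0. split; [|apply (dom_zero _ (Cdom G0 CG0))]; auto.
  - intros a b x y Hx Hy. destruct (Hcommon _ _ _ _ Hx Hy) as (G & CG & Gx & Gy).
    exists G. split; [|apply (dom_add _ (Cdom G CG))]; auto.
  - intros t a x [G [CG Gx]]. exists G. split; [|apply (dom_scal _ (Cdom G CG))]; auto.
  - intros a x [G [CG Gx]]. exact (dom_bound _ (Cdom G CG) _ _ Gx).
Qed.

Lemma maximal_dominated_graph G0 : dominated G0 ->
  exists M, dominated M /\ graph_incl G0 M /\
    forall H, dominated H -> graph_incl M H -> graph_incl H M.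
Proof.
  intro HG0.
  set (T := {G : graph | dominated G /\ graph_incl G0 G}).
  set (le := fun s t : T => boolp.asbool (graph_incl (proj1_sig s) (proj1_sig t))).
  destruct (@classical_sets.ZL_preorder T (exist _ G0 (conj HG0 (fun a x H => H))) le)
    as [[M [HM HM0]] Mmax].
  - intro s. apply boolp.asboolT. intros a x H; exact H.
  - intros r s t Hrs Hst. apply boolp.asboolT. intros a x H.
    apply (boolp.asboolW Hst), (boolp.asboolW Hrs), H.
  - intros A Atot.
    set (C := fun G => G = G0 \/ exists s, A s /\ proj1_sig s = G).
    assert (HC : dominated (fun a x => exists G, C G /\ G a x) /\
                 graph_incl G0 (fun a x => exists G, C G /\ G a x)).
    { split; [apply chain_union_dominated | intros a x H; exists G0; split; [left|]; auto].
      - exists G0. left. reflexivity.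
      - intros G [-> | [s [_ <-]]]; [assumption | exact (proj1 (proj2_sig s))].
      - intros G H [-> | [s [As <-]]] [-> | [t [At <-]]].
        + left. intros a x Ha; exact Ha.
        + left. apply (proj2 (proj2_sig t)).
        + right. apply (proj2 (proj2_sig s)).
        + destruct (Atot s t As At) as [Hst | Hts]; [left | right]; apply boolp.asboolW; assumption. }
    exists (exist (fun G => dominated G /\ graph_incl G0 G) _ HC). intros s As. apply boolp.asboolT. intros a x H.
    exists (proj1_sig s). split; [right; exists s|]; auto.
  - exists M. split; [|split]; auto. intros H HH HMH.
    refine (boolp.asboolW (Mmax (exist _ H (conj HH _)) (boolp.asboolT HMH))).
    intros a x Ha. apply HMH, HM0, Ha.
Qed.

Theorem hahn_banach x0 al :
  x0 <> rv0 -> al <= p x0 -> - p (rscal (-1) x0) <= al ->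
  exists phi : E -> R, (forall a b, phi (radd a b) = phi a + phi b) /\
    (forall t a, phi (rscal t a) = t * phi a) /\ (forall a, phi a <= p a) /\ phi x0 = al.
Proof.
  intros Hx0 Hal_up Hal_low.
  assert (Hp0 : 0 <= p rv0).
  { pose proof (p_pos_homogeneous 2 rv0 ltac:(lra)) as H. rewrite rscal_rv0 in H. lra. }
  set (trivial := fun (a : E) (x : R) => a = rv0 /\ x = 0).
  assert (Htrivial : dominated trivial).
  { split; unfold trivial.
    - intros a x y [_ ->] [_ ->]; reflexivity.
    - auto.
    - intros a b x y [-> ->] [-> ->]. split; [apply radd_0 | ring].
    - intros t a x [-> ->]. split; [apply rscal_rv0 | ring].
    - intros a x [-> ->]. exact Hp0. }
  assert (HG0 : dominated (extend trivial x0 al)).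
  { apply extend_dominated; auto.
    - intros y [H _]. exact (Hx0 H).
    - intros a x [-> ->]. rewrite radd_0l. lra.
    - intros b y [-> ->]. rewrite radd_0l. lra. }
  destruct (maximal_dominated_graph _ HG0) as (M & HM & HG0M & Mmax).
  assert (Mtotal : forall a, exists y, M a y).
  { intro a. apply NNPP. intro Ha.
    destruct (one_step_extension M a HM) as (H & HH & HMH & y & Hy).
    - intros y Hy. apply Ha. exists y. exact Hy.
    - apply Ha. exists y. exact (Mmax H HH HMH a y Hy). }
  destruct (choice _ Mtotal) as [phi Hphi].
  exists phi. split; [|split; [|split]].
  - intros a b. apply (dom_functional _ HM (radd a b)); auto. apply (dom_add _ HM); auto.
  - intros t a. apply (dom_functional _ HM (rscal t a)); auto. apply (dom_scal _ HM); auto.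
  - intro a. apply (dom_bound _ HM); auto.
  - apply (dom_functional _ HM x0); auto. apply HG0M, extend_at. split; reflexivity.
Qed.

End HahnBanach.
(** * Upper limits of bounded sequences

    [seq_sup g] is the supremum of a sequence bounded above (and an arbitrary
    value otherwise); the upper limit of [f] is the infimum over [N] of the
    tail suprema [sup_{n >= N} f n]. *)
Definition seq_sup (g : nat -> R) : R :=
  match excluded_middle_informative (has_ub g) with
  | left H => proj1_sig (ub_to_lub g H)
  | right _ => 0
  end.

Lemma seq_sup_ge g K n : (forall k, g k <= K) -> g n <= seq_sup g.
Proof.
  intro HK. unfold seq_sup.
  destruct (excluded_middle_informative (has_ub g)) as [H | H].
  - destruct (ub_to_lub g H) as [s Hs]. simpl. apply (proj1 Hs). exists n. reflexivity.
  - exfalso. apply H. exists K. intros r [k Hk]. rewrite Hk. apply HK.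
Qed.

Lemma seq_sup_le g b : (forall n, g n <= b) -> seq_sup g <= b.
Proof.
  intro Hb. unfold seq_sup.
  destruct (excluded_middle_informative (has_ub g)) as [H | H].
  - destruct (ub_to_lub g H) as [s Hs]. simpl. apply (proj2 Hs). intros r [k Hk]. rewrite Hk. apply Hb.
  - exfalso. apply H. exists b. intros r [k Hk]. rewrite Hk. apply Hb.
Qed.

Definition nonneg_bounded (f : nat -> R) : Prop := exists K, forall n, 0 <= f n <= K.

Definition tail_sup (f : nat -> R) (N : nat) : R := seq_sup (fun n => f (n + N)%nat).
Definition upper_limit (f : nat -> R) : R := - seq_sup (fun N => - tail_sup f N).

Section UpperLimit.
Variable f : nat -> R.
Hypothesis f_bounded : nonneg_bounded f.

Lemma tail_sup_ge N n : f (n + N)%nat <= tail_sup f N.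
Proof.
  destruct f_bounded as [K HK]. apply (seq_sup_ge (fun n => f (n + N)%nat) K). intro k. apply HK.
Qed.

Lemma tail_sup_nonneg N : 0 <= tail_sup f N.
Proof.
  pose proof (tail_sup_ge N 0). destruct f_bounded as [K HK].
  pose proof (HK (0 + N)%nat). lra.
Qed.

Lemma tail_sup_antitone N N' : (N <= N')%nat -> tail_sup f N' <= tail_sup f N.
Proof.
  intro HN. apply seq_sup_le. intro n.
  replace (n + N')%nat with (n + (N' - N) + N)%nat by lia. apply tail_sup_ge.
Qed.

Lemma upper_limit_le_tail N : upper_limit f <= tail_sup f N.
Proof.
  unfold upper_limit.
  pose proof (seq_sup_ge (fun N => - tail_sup f N) 0 N) as H.
  assert (forall k, - tail_sup f k <= 0) by (intro k; pose proof (tail_sup_nonneg k); lra).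
  specialize (H ltac:(assumption)). simpl in H. lra.
Qed.

Lemma upper_limit_le K : (forall n, f n <= K) -> upper_limit f <= K.
Proof.
  intro HK. pose proof (upper_limit_le_tail 0).
  assert (tail_sup f 0 <= K) by (apply seq_sup_le; intro; apply HK). lra.
Qed.

Lemma upper_limit_harmonic C : (forall n, f n <= C / INR (S n)) -> upper_limit f <= 0.
Proof.
  intro HC. apply Rnot_lt_le. intro Hpos.
  destruct (INR_archimed (upper_limit f) C Hpos) as [N HN].
  assert (HSN : 0 < INR (S N)) by (apply lt_0_INR; lia).
  assert (Htail : tail_sup f N <= C / INR (S N)).
  { apply seq_sup_le. intro n. eapply Rle_trans; [apply HC|].
    assert (0 <= C).
    { pose proof (HC 0%nat). destruct f_bounded as [K HK]. pose proof (HK 0%nat).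
      simpl in *. lra. }
    unfold Rdiv. apply Rmult_le_compat_l; auto.
    apply Rinv_le_contravar; [exact HSN | apply le_INR; lia]. }
  pose proof (upper_limit_le_tail N).
  assert (upper_limit f * INR (S N) <= C).
  { apply (Rmult_le_compat_r (INR (S N))) in Htail; [|lra].
    replace (C / INR (S N) * INR (S N)) with C in Htail by (field; lra).
    apply Rle_trans with (tail_sup f N * INR (S N)); [apply Rmult_le_compat_r|]; lra. }
  rewrite S_INR in H0. lra.
Qed.

End UpperLimit.

Lemma upper_limit_ge f b : (forall N, b <= tail_sup f N) -> b <= upper_limit f.
Proof.
  intro H. unfold upper_limit.
  assert (seq_sup (fun N => - tail_sup f N) <= - b) by (apply seq_sup_le; intro n; specialize (H n); lra).
  lra.
Qed.

Lemma upper_limit_ge_lower f e : nonneg_bounded f -> (forall n, e <= f n) -> e <= upper_limit f.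
Proof.
  intros B H. apply upper_limit_ge. intro N. pose proof (tail_sup_ge f B N 0). specialize (H (0 + N)%nat). lra.
Qed.

Lemma upper_limit_subadditive f g1 g2 :
  nonneg_bounded f -> nonneg_bounded g1 -> nonneg_bounded g2 ->
  (forall n, f n <= g1 n + g2 n) -> upper_limit f <= upper_limit g1 + upper_limit g2.
Proof.
  intros Bf B1 B2 H.
  assert (Htails : forall N1 N2, upper_limit f <= tail_sup g1 N1 + tail_sup g2 N2).
  { intros N1 N2. set (N := Nat.max N1 N2).
    assert (tail_sup f N <= tail_sup g1 N + tail_sup g2 N).
    { apply seq_sup_le. intro n. specialize (H (n + N)%nat).
      pose proof (tail_sup_ge g1 B1 N n). pose proof (tail_sup_ge g2 B2 N n). lra. }
    pose proof (upper_limit_le_tail f Bf N).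
    pose proof (tail_sup_antitone g1 B1 N1 N ltac:(lia)).
    pose proof (tail_sup_antitone g2 B2 N2 N ltac:(lia)). lra. }
  assert (upper_limit f - upper_limit g1 <= upper_limit g2).
  { apply upper_limit_ge. intro N2.
    assert (upper_limit f - tail_sup g2 N2 <= upper_limit g1).
    { apply upper_limit_ge. intro N1. specialize (Htails N1 N2). lra. }
    lra. }
  lra.
Qed.

Lemma upper_limit_pos_homogeneous f g t :
  nonneg_bounded f -> nonneg_bounded g -> 0 < t ->
  (forall n, f n <= t * g n) -> upper_limit f <= t * upper_limit g.
Proof.
  intros Bf Bg Ht H.
  assert (upper_limit f / t <= upper_limit g).
  { apply upper_limit_ge. intro N.
    assert (tail_sup f N <= t * tail_sup g N).
    { apply seq_sup_le. intro n. specialize (H (n + N)%nat). pose proof (tail_sup_ge g Bg N n).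
      apply Rmult_le_compat_l with (r := t) in H0; lra. }
    pose proof (upper_limit_le_tail f Bf N).
    apply Rmult_le_reg_l with t; auto. field_simplify; lra. }
  apply Rmult_le_compat_l with (r := t) in H0; [|lra].
  replace (t * (upper_limit f / t)) with (upper_limit f) in H0 by (field; lra). exact H0.
Qed.

Lemma RtoC_plus r s : Cplus (RtoC r) (RtoC s) = RtoC (r + s).
Proof. unfold Cplus, RtoC; simpl. f_equal; ring. Qed.

Lemma RtoC_mult r s : Cmult (RtoC r) (RtoC s) = RtoC (r * s).
Proof. unfold Cmult, RtoC; simpl. f_equal; ring. Qed.

Lemma Cmult_comm a b : Cmult a b = Cmult b a.
Proof. unfold Cmult. f_equal; ring. Qed.

Lemma Cmod_RtoC r : Cmod (RtoC r) = Rabs r.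
Proof.
  unfold Cmod, RtoC; simpl. replace (r * r + 0 * 0) with (Rsqr r) by (unfold Rsqr; ring).
  apply sqrt_Rsqr_abs.
Qed.

Lemma Cmod_nonneg a : 0 <= Cmod a.
Proof. apply sqrt_pos. Qed.

Lemma unit_rotation (l : CC) : exists a, Cmod a = 1 /\ Cre (Cmult a l) = Cmod l.
Proof.
  destruct l as [u w]. unfold Cmod; simpl.
  set (r := sqrt (u * u + w * w)).
  assert (Hr2 : r * r = u * u + w * w) by (apply sqrt_sqrt; nra).
  destruct (Req_dec r 0) as [Hr0 | Hr0].
  - exists C1. unfold C1, Cmod; simpl. rewrite Hr0.
    replace (1 * 1 + 0 * 0) with 1 by ring. split; [apply sqrt_1 | nra].
  - exists (mkCC (u / r) (- w / r)). unfold Cmod; simpl. split.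
    + replace (u / r * (u / r) + - w / r * (- w / r)) with 1; [apply sqrt_1|].
      replace (u / r * (u / r) + - w / r * (- w / r)) with ((u * u + w * w) / (r * r))
        by (field; exact Hr0).
      rewrite <- Hr2. field. exact Hr0.
    + replace (u / r * u - - w / r * w) with ((u * u + w * w) / r) by (field; exact Hr0).
      rewrite <- Hr2. field. exact Hr0.
Qed.

Section NormedSpaceAlgebra.
Variable V : CNormedSpace.

Lemma vadd_cancel (a b c : V) : vadd a b = vadd a c -> b = c.
Proof.
  intro H.
  assert (H' : vadd (vopp a) (vadd a b) = vadd (vopp a) (vadd a c)) by (rewrite H; reflexivity).
  rewrite !vadd_assoc, (vadd_comm _ (vopp a) a), vadd_opp in H'.
  rewrite (vadd_comm _ vzero b), (vadd_comm _ vzero c), !vadd_zero in H'. exact H'.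
Qed.

Lemma vscal_0 (x : V) : vscal (RtoC 0) x = vzero.
Proof.
  apply (vadd_cancel (vscal (RtoC 0) x)).
  rewrite vadd_zero, <- vscal_distr_c, RtoC_plus, Rplus_0_l. reflexivity.
Qed.

Lemma vscal_zero (a : CC) : vscal a (@vzero V) = vzero.
Proof.
  apply (vadd_cancel (vscal a vzero)). rewrite vadd_zero, <- vscal_distr_v, vadd_zero.
  reflexivity.
Qed.

Lemma vopp_scal (x : V) : vopp x = vscal (RtoC (-1)) x.
Proof.
  apply (vadd_cancel x). rewrite vadd_opp. rewrite <- (vscal_one V x) at 1.
  change C1 with (RtoC 1). rewrite <- vscal_distr_c, RtoC_plus.
  replace (1 + -1) with 0 by ring. rewrite vscal_0. reflexivity.
Qed.

Lemma vnorm_opp (x : V) : vnorm (vscal (RtoC (-1)) x) = vnorm x.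
Proof. rewrite vnorm_scal, Cmod_RtoC, Rabs_left by lra. ring. Qed.

Lemma vadd_swap (a b c d : V) : vadd (vadd a b) (vadd c d) = vadd (vadd a c) (vadd b d).
Proof.
  rewrite <- !vadd_assoc. f_equal. rewrite !vadd_assoc. f_equal. apply vadd_comm.
Qed.

End NormedSpaceAlgebra.

(** * The real vector space of bounded sequences *)
Section BoundedSequences.
Variable V : CNormedSpace.

Lemma bounded_add (x y : nat -> V) :
  bounded_seq x -> bounded_seq y -> bounded_seq (seq_add x y).
Proof.
  intros [M1 H1] [M2 H2]. exists (M1 + M2). intro n. unfold seq_add.
  pose proof (vnorm_triangle V (x n) (y n)). specialize (H1 n). specialize (H2 n). lra.
Qed.

Lemma bounded_scal a (x : nat -> V) : bounded_seq x -> bounded_seq (seq_scal a x).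
Proof.
  intros [M H]. exists (Cmod a * M). intro n. unfold seq_scal. rewrite vnorm_scal.
  apply Rmult_le_compat_l; [apply Cmod_nonneg | apply H].
Qed.

Lemma bounded_const (v : V) : bounded_seq (const_seq v).
Proof. exists (vnorm v). intro n. apply Rle_refl. Qed.

Lemma bounded_shift (x : nat -> V) : bounded_seq x -> bounded_seq (shift x).
Proof. intros [M H]. exists M. intro n. apply H. Qed.

Definition BS := {x : nat -> V | bounded_seq x}.

Lemma BS_eq (a b : BS) : proj1_sig a = proj1_sig b -> a = b.
Proof.
  destruct a as [a Ha], b as [b Hb]; simpl. intros ->. f_equal. apply proof_irrelevance.
Qed.

Definition BSadd (a b : BS) : BS :=
  exist _ (seq_add (proj1_sig a) (proj1_sig b)) (bounded_add _ _ (proj2_sig a) (proj2_sig b)).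
Definition BSscalC (c : CC) (a : BS) : BS :=
  exist _ (seq_scal c (proj1_sig a)) (bounded_scal c _ (proj2_sig a)).
Definition BSshift (a : BS) : BS :=
  exist _ (shift (proj1_sig a)) (bounded_shift _ (proj2_sig a)).

Definition BSR : RVS.
Proof.
  refine (Build_RVS BS (exist _ (const_seq vzero) (bounded_const vzero)) BSadd
            (fun r => BSscalC (RtoC r)) _ _ _ _ _ _ _ _);
    intros; apply BS_eq; simpl; extensionality n; unfold seq_add, seq_scal, const_seq.
  - apply vadd_assoc.
  - apply vadd_comm.
  - apply vadd_zero.
  - rewrite <- vopp_scal. apply vadd_opp.
  - apply vscal_distr_v.
  - rewrite <- RtoC_plus. apply vscal_distr_c.
  - rewrite vscal_assoc, RtoC_mult. reflexivity.
  - apply vscal_one.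
Defined.

End BoundedSequences.

Arguments BSadd {V}. Arguments BSscalC {V}. Arguments BSshift {V}.

(** * Cesàro means and the sublinear functional [cesaro_limsup] *)
Section Cesaro.
Variable V : CNormedSpace.

Definition cesaro (n : nat) (y : nat -> V) : V := vscal (RtoC (/ INR (S n))) (vsum y (S n)).
Definition cesaro_limsup (y : nat -> V) : R := upper_limit (fun n => vnorm (cesaro n y)).

Lemma INR_S_pos n : 0 < INR (S n).
Proof. apply lt_0_INR; lia. Qed.

Lemma vsum_add (a b : nat -> V) m : vsum (seq_add a b) m = vadd (vsum a m) (vsum b m).
Proof.
  induction m as [|m IH]; simpl.
  - rewrite vadd_zero. reflexivity.
  - rewrite IH. unfold seq_add. apply vadd_swap.
Qed.

Lemma vsum_scal c (a : nat -> V) m : vsum (seq_scal c a) m = vscal c (vsum a m).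
Proof.
  induction m as [|m IH]; simpl.
  - rewrite vscal_zero. reflexivity.
  - rewrite IH, vscal_distr_v. reflexivity.
Qed.

Lemma vsum_const (v : V) m : vsum (const_seq v) m = vscal (RtoC (INR m)) v.
Proof.
  induction m as [|m IH]; cbn [vsum].
  - rewrite vscal_0. reflexivity.
  - rewrite IH. unfold const_seq. rewrite <- (vscal_one V v) at 2.
    change C1 with (RtoC 1). rewrite <- vscal_distr_c, RtoC_plus, S_INR. reflexivity.
Qed.

Lemma vsum_norm (a : nat -> V) M m :
  (forall k, vnorm (a k) <= M) -> vnorm (vsum a m) <= INR m * M.
Proof.
  intro H. induction m as [|m IH]; cbn [vsum].
  - rewrite vnorm_zero. simpl. lra.
  - pose proof (vnorm_triangle V (vsum a m) (a m)). specialize (H m). rewrite S_INR. lra.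
Qed.

Lemma cesaro_add n (a b : nat -> V) : cesaro n (seq_add a b) = vadd (cesaro n a) (cesaro n b).
Proof. unfold cesaro. rewrite vsum_add, vscal_distr_v. reflexivity. Qed.

Lemma cesaro_scal n c (a : nat -> V) : cesaro n (seq_scal c a) = vscal c (cesaro n a).
Proof. unfold cesaro. rewrite vsum_scal, !vscal_assoc, Cmult_comm. reflexivity. Qed.

Lemma cesaro_const n (v : V) : cesaro n (const_seq v) = v.
Proof.
  unfold cesaro. rewrite vsum_const, vscal_assoc, RtoC_mult, Rinv_l.
  - apply vscal_one.
  - pose proof (INR_S_pos n). lra.
Qed.

Lemma cesaro_norm_le n (a : nat -> V) M :
  (forall k, vnorm (a k) <= M) -> vnorm (cesaro n a) <= M.
Proof.
  intro H. unfold cesaro. rewrite vnorm_scal, Cmod_RtoC. pose proof (INR_S_pos n).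
  rewrite Rabs_right by (left; apply Rinv_0_lt_compat; lra).
  pose proof (vsum_norm a M (S n) H) as Hsum.
  apply Rmult_le_compat_l with (r := / INR (S n)) in Hsum; [|left; apply Rinv_0_lt_compat; lra].
  replace (/ INR (S n) * (INR (S n) * M)) with M in Hsum by (field; lra). exact Hsum.
Qed.

(** The telescoping sum behind shift invariance. *)
Lemma vsum_shift_difference (w : nat -> V) m :
  vsum (seq_add w (seq_scal (RtoC (-1)) (shift w))) m = vadd (w 0%nat) (vscal (RtoC (-1)) (w m)).
Proof.
  induction m as [|m IH]; simpl.
  - rewrite <- vopp_scal, vadd_opp. reflexivity.
  - rewrite IH. unfold seq_add, seq_scal, shift. rewrite <- !vadd_assoc. f_equal.
    rewrite vadd_assoc, (vadd_comm _ (vscal _ (w m)) (w m)), <- vopp_scal, vadd_opp.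
    rewrite vadd_comm, vadd_zero. reflexivity.
Qed.

Lemma cesaro_norms_bounded (y : nat -> V) :
  bounded_seq y -> nonneg_bounded (fun n => vnorm (cesaro n y)).
Proof.
  intros [M H]. exists M. intro n. split; [apply vnorm_nonneg | apply cesaro_norm_le; auto].
Qed.

Lemma cesaro_limsup_le (y : nat -> V) K :
  bounded_seq y -> (forall n, vnorm (y n) <= K) -> cesaro_limsup y <= K.
Proof.
  intros B H. apply upper_limit_le; [apply cesaro_norms_bounded; auto|].
  intro n. apply cesaro_norm_le; auto.
Qed.

Lemma cesaro_limsup_nonneg (y : nat -> V) : bounded_seq y -> 0 <= cesaro_limsup y.
Proof.
  intro B. apply upper_limit_ge_lower; [apply cesaro_norms_bounded; auto|].
  intro n. apply vnorm_nonneg.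
Qed.

Lemma cesaro_limsup_opp (y : nat -> V) :
  cesaro_limsup (seq_scal (RtoC (-1)) y) = cesaro_limsup y.
Proof.
  unfold cesaro_limsup. f_equal. extensionality n. rewrite cesaro_scal. apply vnorm_opp.
Qed.

(** The means of [w - T w] are [(w 0 - w (n+1)) / (n+1)], which tend to 0. *)
Lemma cesaro_limsup_shift_difference (w : nat -> V) : bounded_seq w ->
  cesaro_limsup (seq_add w (seq_scal (RtoC (-1)) (shift w))) <= 0.
Proof.
  intro B. pose proof B as [M HM].
  apply (upper_limit_harmonic _ (cesaro_norms_bounded _ ltac:(
    apply bounded_add; [|apply bounded_scal, bounded_shift]; exact B)) (2 * M)).
  intro n. unfold cesaro. rewrite vsum_shift_difference, vnorm_scal, Cmod_RtoC.
  pose proof (INR_S_pos n).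
  rewrite Rabs_right by (left; apply Rinv_0_lt_compat; lra).
  pose proof (vnorm_triangle V (w 0%nat) (vscal (RtoC (-1)) (w (S n)))).
  rewrite vnorm_opp in H0. pose proof (HM 0%nat). pose proof (HM (S n)).
  unfold Rdiv. rewrite (Rmult_comm (2 * M)).
  apply Rmult_le_compat_l; [left; apply Rinv_0_lt_compat|]; lra.
Qed.

Definition cesaro_limsupB (Y : BSR V) : R := cesaro_limsup (proj1_sig Y).

Lemma cesaro_limsupB_subadditive (A B : BSR V) :
  cesaro_limsupB (radd A B) <= cesaro_limsupB A + cesaro_limsupB B.
Proof.
  destruct A as [a Ha], B as [b Hb]. unfold cesaro_limsupB. simpl.
  apply upper_limit_subadditive; try apply cesaro_norms_bounded; auto.
  - apply bounded_add; auto.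
  - intro n. rewrite cesaro_add. apply vnorm_triangle.
Qed.

Lemma cesaro_limsupB_pos_homogeneous t (Y : BSR V) :
  0 < t -> cesaro_limsupB (rscal t Y) <= t * cesaro_limsupB Y.
Proof.
  destruct Y as [y Hy]. intro Ht. unfold cesaro_limsupB. simpl.
  apply upper_limit_pos_homogeneous; try apply cesaro_norms_bounded; auto.
  - apply bounded_scal; auto.
  - intro n. rewrite cesaro_scal, vnorm_scal, Cmod_RtoC, Rabs_right by lra. lra.
Qed.

End Cesaro.

(** * From a dominated real functional to a Banach limit

    A real-linear [phi] on bounded sequences with [phi <= cesaro_limsup] is
    complexified as [L z = phi z - i phi (i z)].  Domination by
    [cesaro_limsup] yields shift invariance and [|L z| <= sup |z_n|]. *)
Section Complexification.
Variable V : CNormedSpace.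
Variable phi : BSR V -> R.
Hypothesis phi_add : forall A B, phi (radd A B) = phi A + phi B.
Hypothesis phi_scal : forall t A, phi (rscal t A) = t * phi A.
Hypothesis phi_dominated : forall A, phi A <= cesaro_limsupB V A.

Definition iC : CC := mkCC 0 1.

Definition complexify (z : nat -> V) : CC :=
  match excluded_middle_informative (bounded_seq z) with
  | left H => mkCC (phi (exist _ z H)) (- phi (BSscalC iC (exist _ z H)))
  | right _ => C0
  end.

Lemma complexify_val z (H : bounded_seq z) :
  complexify z = mkCC (phi (exist _ z H)) (- phi (BSscalC iC (exist _ z H))).
Proof.
  unfold complexify. destruct (excluded_middle_informative (bounded_seq z)) as [H' | H'].
  - replace H' with H by apply proof_irrelevance. reflexivity.
  - contradiction.
Qed.

(** Complex scaling, seen through [phi]: [a = Re a + i Im a]. *)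
Lemma phi_complex_scal a (Z : BSR V) :
  phi (BSscalC a Z) = Cre a * phi Z + Cim a * phi (BSscalC iC Z).
Proof.
  replace (BSscalC a Z) with (radd (rscal (Cre a) Z) (rscal (Cim a) (BSscalC iC Z : BSR V))).
  - rewrite phi_add, !phi_scal. reflexivity.
  - apply BS_eq. simpl. extensionality n. unfold seq_add, seq_scal.
    rewrite vscal_assoc, <- vscal_distr_c. f_equal.
    destruct a. unfold Cplus, Cmult, RtoC, iC; simpl. f_equal; ring.
Qed.

Lemma phi_shift_invariant (Z : BSR V) : phi (BSshift Z) = phi Z.
Proof.
  set (D := radd Z (rscal (-1) (BSshift Z : BSR V))).
  assert (HD : phi D = phi Z - phi (BSshift Z)) by (unfold D; rewrite phi_add, phi_scal; ring).
  destruct Z as [z Hz].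
  assert (Hle : phi D <= 0).
  { eapply Rle_trans; [apply phi_dominated|]. apply cesaro_limsup_shift_difference, Hz. }
  assert (Hge : phi (rscal (-1) D) <= 0).
  { eapply Rle_trans; [apply phi_dominated|]. unfold cesaro_limsupB. simpl.
    rewrite cesaro_limsup_opp. apply cesaro_limsup_shift_difference, Hz. }
  rewrite phi_scal in Hge. lra.
Qed.

Lemma complexify_add x y : bounded_seq x -> bounded_seq y ->
  complexify (seq_add x y) = Cplus (complexify x) (complexify y).
Proof.
  intros Hx Hy.
  rewrite (complexify_val _ (bounded_add V _ _ Hx Hy)), (complexify_val _ Hx), (complexify_val _ Hy).
  replace (exist _ (seq_add x y) (bounded_add V x y Hx Hy))
    with (radd (exist _ x Hx : BSR V) (exist _ y Hy)) by (apply BS_eq; reflexivity).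
  replace (BSscalC iC (radd (exist _ x Hx : BSR V) (exist _ y Hy)))
    with (radd (BSscalC iC (exist _ x Hx) : BSR V) (BSscalC iC (exist _ y Hy))).
  - rewrite !phi_add. unfold Cplus. simpl. f_equal. ring.
  - apply BS_eq. simpl. extensionality n. unfold seq_add, seq_scal.
    rewrite vscal_distr_v. reflexivity.
Qed.

Lemma complexify_scal a x : bounded_seq x -> complexify (seq_scal a x) = Cmult a (complexify x).
Proof.
  intro Hx. rewrite (complexify_val _ (bounded_scal V a x Hx)), (complexify_val _ Hx).
  replace (exist _ (seq_scal a x) (bounded_scal V a x Hx)) with (BSscalC a (exist _ x Hx))
    by (apply BS_eq; reflexivity).
  replace (BSscalC iC (BSscalC a (exist _ x Hx))) with (BSscalC (Cmult iC a) (exist _ x Hx))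
    by (apply BS_eq; simpl; extensionality n; unfold seq_scal; symmetry; apply vscal_assoc).
  rewrite (phi_complex_scal a), (phi_complex_scal (Cmult iC a)).
  destruct a as [ar ai]. unfold Cmult, iC. simpl. f_equal; ring.
Qed.

Lemma complexify_shift x : bounded_seq x -> complexify (shift x) = complexify x.
Proof.
  intro Hx. rewrite (complexify_val _ (bounded_shift V x Hx)), (complexify_val _ Hx).
  replace (exist _ (shift x) (bounded_shift V x Hx)) with (BSshift (exist _ x Hx))
    by (apply BS_eq; reflexivity).
  replace (BSscalC iC (BSshift (exist _ x Hx))) with (BSshift (BSscalC iC (exist _ x Hx)))
    by (apply BS_eq; reflexivity).
  rewrite !phi_shift_invariant. reflexivity.
Qed.

(** The real part is dominated by the sup norm; rotating [z] by a unit scalar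
    turns this into a bound on the modulus. *)
Lemma complexify_re_le z M :
  bounded_seq z -> (forall n, vnorm (z n) <= M) -> Cre (complexify z) <= M.
Proof.
  intros Hz HM. rewrite (complexify_val _ Hz). simpl.
  eapply Rle_trans; [apply phi_dominated|]. apply cesaro_limsup_le; auto.
Qed.

Lemma complexify_mod_le z M :
  bounded_seq z -> (forall n, vnorm (z n) <= M) -> Cmod (complexify z) <= M.
Proof.
  intros Hz HM. destruct (unit_rotation (complexify z)) as [a [Ha1 Ha]].
  rewrite <- Ha, <- complexify_scal by exact Hz.
  apply complexify_re_le; [apply bounded_scal, Hz|].
  intro n. unfold seq_scal. rewrite vnorm_scal, Ha1, Rmult_1_l. apply HM.
Qed.

Lemma complexify_banach_limit : BanachLimit complexify.
Proof.
  split; [|split; [|split]].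
  - exact complexify_add.
  - intros a x Hx. exact (complexify_scal a x Hx).
  - intros z M Hz HM. exact (complexify_mod_le z M Hz HM).
  - exact complexify_shift.
Qed.

End Complexification.

(** If [x] is strongly almost convergent to [v], the Cesàro means of [x - v]
    have vanishing upper limit: otherwise Hahn–Banach gives a dominated
    functional which is positive on [x - v], and its complexification is a
    Banach limit separating [x] from the constant sequence [v]. *)
Lemma strongly_almost_convergent_cesaro (V : CNormedSpace) (x : nat -> V) (v : V) :
  bounded_seq x -> strongly_almost_convergent x v ->
  cesaro_limsup V (seq_add x (seq_scal (RtoC (-1)) (const_seq v))) <= 0.
Proof.
  intros Hx Hsac.
  set (X := exist _ x Hx : BSR V).
  set (Vc := exist _ (const_seq v) (bounded_const V v) : BSR V).
  set (D := radd X (rscal (-1) Vc)).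
  change (cesaro_limsupB V D <= 0). apply Rnot_lt_le. intro Hpos.
  assert (HD0 : D <> rv0).
  { intro HD. assert (cesaro_limsupB V D <= 0).
    { rewrite HD. apply cesaro_limsup_le; [apply bounded_const|].
      intro n. unfold const_seq. rewrite vnorm_zero. lra. }
    lra. }
  assert (Hopp : 0 <= cesaro_limsupB V (rscal (-1) D))
    by (apply cesaro_limsup_nonneg, (proj2_sig (rscal (-1) D))).
  destruct (hahn_banach (BSR V) (cesaro_limsupB V) (cesaro_limsupB_subadditive V)
              (cesaro_limsupB_pos_homogeneous V) D (cesaro_limsupB V D) HD0 (Rle_refl _)
              ltac:(lra)) as (phi & Hadd & Hscal & Hdom & HphiD).
  pose proof (Hsac _ (complexify_banach_limit V phi Hadd Hscal Hdom)) as HL.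
  rewrite (complexify_val V phi _ Hx), (complexify_val V phi _ (bounded_const V v)) in HL.
  injection HL as HXV _.
  assert (phi D = 0) by (unfold D; rewrite Hadd, Hscal; fold X Vc in HXV; rewrite HXV; ring).
  lra.
Qed.

Lemma cesaro_in_convex_hull (V : CNormedSpace) (x : nat -> V) n :
  in_convex_hull (range_of x) (cesaro V n x).
Proof.
  exists (S n), (fun _ => / INR (S n)), x. pose proof (INR_S_pos n). split; [|split].
  - intros i _. split; [left; apply Rinv_0_lt_compat; lra | exists i; reflexivity].
  - assert (Hconst : forall c m, rsum (fun _ => c) m = INR m * c).
    { intros c m. induction m as [|m IH]; cbn [rsum]; [simpl; ring | rewrite IH, S_INR; ring]. }
    rewrite Hconst. field. lra.
  - unfold cesaro. rewrite <- vsum_scal. reflexivity.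
Qed.

Lemma cesaro_norm_sub_const (V : CNormedSpace) (x : nat -> V) (v : V) n :
  vnorm (cesaro V n (seq_add x (seq_scal (RtoC (-1)) (const_seq v)))) =
  vnorm (vsub v (cesaro V n x)).
Proof.
  rewrite cesaro_add, cesaro_scal, cesaro_const. unfold vsub.
  rewrite vopp_scal, <- vnorm_opp, vscal_distr_v, vscal_assoc, RtoC_mult.
  replace (-1 * -1) with 1 by ring. change (RtoC 1) with C1.
  rewrite vscal_one, vadd_comm. reflexivity.
Qed.

Theorem mainTheorem15 (V : CNormedSpace) (x : nat -> V) (v : V) :
  bounded_seq x ->
  strongly_almost_convergent x v ->
  in_closure (in_convex_hull (range_of x)) v.
Proof.
  intros Hx Hsac eps Heps. apply NNPP. intro Hfar.
  assert (Hmeans : forall n, eps <= vnorm (vsub v (cesaro V n x))).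
  { intro n. apply Rnot_lt_le. intro Hlt. apply Hfar.
    exists (cesaro V n x). split; [apply cesaro_in_convex_hull | exact Hlt]. }
  assert (Hlower : eps <= cesaro_limsup V (seq_add x (seq_scal (RtoC (-1)) (const_seq v)))).
  { apply upper_limit_ge_lower.
    - apply cesaro_norms_bounded, bounded_add, bounded_scal, bounded_const. exact Hx.
    - intro n. rewrite cesaro_norm_sub_const. apply Hmeans. }
  pose proof (strongly_almost_convergent_cesaro V x v Hx Hsac). lra.
Qed.
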